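(* Let $f$ be a homeomorphism of a compact, connected, separable metric space $\mathcal M$, and assume that $\mathcal M$ itself is not a chain-transitive set for $f$. Let $C$ be a reversible core of $f$. Then there exist an infinite sequence of pairwise distinct dissipative attractors $A_1,A_2,\dots$ of $f$ and an infinite sequence of pairwise distinct dissipative repellers $R_1,R_2,\dots$ of $f$ which accumulate on $C$: there are $\delta_k\to 0$ such that $A_k$ and $R_k$ lie in the $\delta_k$-neighbourhood of $C$ for every $k$ (so all limit points of these sequences lie in $C$).
   Context: An $\varepsilon$-orbit of $f$ is a finite sequence $x_1,\dots,x_N$ with $\mathrm{dist}(f(x_j),x_{j+1})<\varepsilon$ for $j=1,\dots,N-1$; it connects $x_1$ to $x_N$. A closed invariant set $\Lambda$ is chain-transitive if for every $\varepsilon>0$ and all $x,y\in\Lambda$ there is an $\varepsilon$-orbit lying in $\Lambda$ connecting $x$ to $y$. A closed invariant set $A$ is stable if for every $\delta>0$ there is $\varepsilon>0$ such that no $\varepsilon$-orbit starting in $A$ leaves the $\delta$-neighbourhood of $A$. A CRH-attractor (Conley–Ruelle–Hurley attractor) of $f$ is a closed invariant set that is chain-transitive and stable; a CRH-repeller of $f$ is a CRH-attractor of $f^{-1}$. A CRH-attractor $A$ is a dissipative attractor if there exists a point $x\notin A$ such that for every $\varepsilon>0$ some $\varepsilon$-orbit connects $x$ to a point of $A$; otherwise $A$ is called a reversible core. A dissipative repeller is a dissipative attractor of $f^{-1}$. *)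

From HB Require Import structures.
From mathcomp Require Import all_boot all_order all_algebra.
From mathcomp Require Import all_classical all_reals all_analysis.
Set Implicit Arguments. Unset Strict Implicit. Unset Printing Implicit Defensive.
Import Order.TTheory GRing.Theory Num.Theory.
Local Open Scope classical_set_scope.
Local Open Scope ring_scope.

Section CRH.
Context {R : realType} {T : metricType R}.
Implicit Types (f : T -> T) (A : set T) (eps : R).

Definition separable_space : Prop :=
  exists D : set T, countable D /\ dense D.

Definition homeomorphism_with_inverse (f g : T -> T) : Prop :=
  continuous f /\ continuous g /\ cancel f g /\ cancel g f.

(* An eps-orbit x_0, ..., x_N (N+1 points, N >= 0), given as xs restricted
   to {0..N}: dist (f x_j) x_{j+1} < eps for j < N. *)
Definition eps_orbit f eps (xs : nat -> T) (N : nat) : Prop :=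
  forall j, (j < N)%N -> mdist (f (xs j)) (xs j.+1) < eps.

Definition connects (xs : nat -> T) (N : nat) (x y : T) : Prop :=
  xs 0%N = x /\ xs N = y.

Definition lies_in (xs : nat -> T) (N : nat) A : Prop :=
  forall j, (j <= N)%N -> A (xs j).

Definition invariant f A : Prop := f @` A = A.

Definition nbhd_of A (delta : R) : set T :=
  [set y | exists2 a, A a & mdist a y < delta].

Definition chain_transitive f A : Prop :=
  closed A /\ invariant f A /\
  forall eps, 0 < eps -> forall x y, A x -> A y ->
    exists xs N, eps_orbit f eps xs N /\ connects xs N x y /\ lies_in xs N A.

Definition stable f A : Prop :=
  closed A /\ invariant f A /\
  forall delta, 0 < delta -> exists2 eps, 0 < eps &
    forall xs N, eps_orbit f eps xs N -> A (xs 0%N) ->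
      forall j, (j <= N)%N -> nbhd_of A delta (xs j).

Definition CRH_attractor f A : Prop :=
  A !=set0 /\ chain_transitive f A /\ stable f A.

Definition CRH_repeller f finv A : Prop := CRH_attractor finv A.

Definition dissipative_attractor f A : Prop :=
  CRH_attractor f A /\
  exists x, ~ A x /\ forall eps, 0 < eps ->
    exists xs N y, eps_orbit f eps xs N /\ A y /\ connects xs N x y.

Definition reversible_core f A : Prop :=
  CRH_attractor f A /\ ~ dissipative_attractor f A.

Definition dissipative_repeller f finv A : Prop :=
  dissipative_attractor finv A.

End CRH.

From Pilot Require Import Defs.
From HB Require Import structures.
From mathcomp Require Import all_boot all_order all_algebra.
From mathcomp Require Import all_classical all_reals all_analysis.
From mathcomp Require Import lra zify.
Set Implicit Arguments. Unset Strict Implicit. Unset Printing Implicit Defensive.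
Import Order.TTheory GRing.Theory Num.Theory.
Local Open Scope classical_set_scope.
Local Open Scope ring_scope.

(* Stability of the reversible core C gives, for small e, a neighbourhood of C
   that no e-chain issued from C leaves.  The set S of endpoints of such chains
   is open and nonempty, and it misses a point of M because C is not all of M
   (M is not chain transitive); by connectedness S is not closed.  A point v of
   its frontier lies outside S, hence outside C, while every point chain-reachable
   from v lies in S; as C is a reversible core, none of them lies in C.  By Zorn's
   lemma and compactness, the chain-reachable set of v contains a minimal set A
   equal to the chain-reachable set of each of its points; such an A is a
   CRH-attractor, and v witnesses that it is dissipative.  Making the
   neighbourhoods shrink below the distance to C of a point of the previous attractor
   yields pairwise distinct attractors.  Reversing chains shows that C is stable
   and attracts no outside point for f^-1 too, which gives the repellers. *)

Section MetricFacts.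
Context {R : realType} {M : metricType R}.
Implicit Types (x y z : M) (S : set M).

Lemma nbhs_mdist x S :
  nbhs x S <-> exists2 r : R, 0 < r & forall y, mdist x y < r -> S y.
Proof. by rewrite -metricType_numDomainType.filter_from_mdist_nbhs. Qed.

Lemma continuous_mdist (h : M -> M) x : continuous h ->
  forall e : R, 0 < e -> exists2 r : R, 0 < r &
    forall y, mdist x y < r -> mdist (h x) (h y) < e.
Proof. by move=> /(_ x) /metricType_numDomainType.cvgrPdist_lt hx e /hx /nbhs_mdist. Qed.

Lemma closure_mdist S x : closure S x ->
  forall e : R, 0 < e -> exists2 s, S s & mdist x s < e.
Proof.
move=> clx e e0; have [|s [Ss xs]] := clx [set y | mdist x y < e].
  by apply/nbhs_mdist; exists e.
by exists s.
Qed.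

Lemma closed_not_nbhd_of S z : closed S -> ~ S z ->
  exists2 r : R, 0 < r & ~ nbhd_of S r z.
Proof.
move=> cS Sz; apply: contrapT => /forall2NP nearz; apply/Sz/cS => B.
move=> /nbhs_mdist [r r0 rB]; have [//|/contrapT [s Ss sz]] := nearz r.
by exists s; split => //; apply: rB; rewrite metric_sym.
Qed.

Lemma nbhd_of_le S (d1 d2 : R) : d1 <= d2 -> nbhd_of S d1 `<=` nbhd_of S d2.
Proof. by move=> d12 y [a Sa ay]; exists a => //; apply: lt_le_trans d12. Qed.

Lemma compact_cluster_seq (u : nat -> M) : compact [set: M] ->
  exists z, forall e : R, 0 < e -> forall N, exists2 n, (N <= n)%N & mdist z (u n) < e.
Proof.
move=> cM; have [z [_ cz]] := cM (u @ \oo) _ filterT.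
exists z => e e0 N.
have tail : (u @ \oo) (u @` [set n | (N <= n)%N]).
  by exists N => // n /= Nn; exists n.
have ball_z : nbhs z [set y | mdist z y < e] by apply/nbhs_mdist; exists e.
by have [_ [[n Nn <-] zn]] := cz _ _ tail ball_z; exists n.
Qed.

Lemma compact_unif_cont (h : M -> M) : compact [set: M] -> continuous h ->
  forall e : R, 0 < e -> exists2 r : R, 0 < r &
    forall x y, mdist x y < r -> mdist (h x) (h y) < e.
Proof.
move=> cM hc e e0; apply: contrapT => /forall2NP far.
have {}far n : exists p : M * M,
    mdist p.1 p.2 < n.+1%:R^-1 /\ e <= mdist (h p.1) (h p.2).
  have [//|/existsNP [x /existsNP [y /not_implyP [xy /negP]]]] := far n.+1%:R^-1.
  by rewrite -leNgt => hxy; exists (x, y).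
have [u Hu] := choice far.
have [z Hz] := compact_cluster_seq (fst \o u) cM.
have e20 : 0 < e / 2 by lra.
have [r r0 Hr] := continuous_mdist z hc e20.
have r20 : 0 < r / 2 by lra.
have [N _ HN] := near_infty_natSinv_lt (PosNum r20).
have [n Nn zn] := Hz _ r20 N.
have [d1 d2] := Hu n; have /= small := HN n Nn; rewrite /= in zn.
have zy : mdist z (u n).2 < r.
  apply: le_lt_trans (metric_triangle _ (u n).1 _) _.
  by rewrite [r]splitr ltrD // (lt_trans d1 small).
have h1 : mdist (h z) (h (u n).1) < e / 2 by apply: Hr; lra.
have : mdist (h (u n).1) (h (u n).2) < e.
  apply: le_lt_trans (metric_triangle _ (h z) _) _.
  by rewrite [e]splitr ltrD // ?Hr // metric_sym.
by rewrite ltNge d2.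
Qed.

End MetricFacts.

Lemma connected_closure_notin {T : topologicalType} (S : set T) (z : T) :
  connected [set: T] -> open S -> S !=set0 -> ~ S z ->
  exists v, closure S v /\ ~ S v.
Proof.
move=> cT oS [s Ss] Sz; apply: contrapT => /forallNP noedge.
have clS : closed S.
  by move=> v clv; apply: contrapT => Sv; apply: (noedge v).
have ST : S = [set: T].
  by apply: cT; [exists s | exists S; rewrite ?setTI | exists S; rewrite ?setTI].
by apply: Sz; rewrite ST.
Qed.

Section Chains.
Context {R : realType} {M : metricType R}.
Variable g : M -> M.
Implicit Types (x y z w : M) (xs ys : nat -> M) (e : R).

Definition chain_cat xs ys N : nat -> M :=
  fun j => if (j <= N)%N then xs j else ys (j - N)%N.

Definition chain_set xs i w : nat -> M := fun j => if j == i then w else xs j.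

Lemma chain_cat0 xs ys N : chain_cat xs ys N 0 = xs 0%N.
Proof. by []. Qed.

Lemma chain_cat_last xs ys N K : xs N = ys 0%N -> chain_cat xs ys N (N + K) = ys K.
Proof.
move=> glue; rewrite /chain_cat; case: leqP => [NK|_]; last by rewrite addKn.
have -> : K = 0%N by lia.
by rewrite addn0.
Qed.

Lemma chain_set_at xs i w : chain_set xs i w i = w.
Proof. by rewrite /chain_set eqxx. Qed.

Lemma chain_set_other xs i w j : j != i -> chain_set xs i w j = xs j.
Proof. by rewrite /chain_set => /negbTE ->. Qed.

Lemma eps_orbit_le e e' xs N : e <= e' -> eps_orbit g e xs N -> eps_orbit g e' xs N.
Proof. by move=> ee' xsN j jN; apply: lt_le_trans (xsN j jN) ee'. Qed.

Lemma eps_orbit_prefix e xs N K : (K <= N)%N -> eps_orbit g e xs N -> eps_orbit g e xs K.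
Proof. by move=> KN xsN j jK; apply: xsN; apply: leq_trans jK KN. Qed.

Lemma eps_orbit_cat e xs ys N K : eps_orbit g e xs N -> eps_orbit g e ys K ->
  xs N = ys 0%N -> eps_orbit g e (chain_cat xs ys N) (N + K).
Proof.
move=> xsN ysK glue j jNK; rewrite /chain_cat.
case: (ltnP j N) => [jN|Nj]; first by rewrite (ltnW jN); apply: xsN.
have -> : (j.+1 - N)%N = (j - N).+1 by rewrite subSn.
case: leqP => [jN|_]; last by apply: ysK; lia.
have -> : j = N by apply/eqP; rewrite eqn_leq jN Nj.
by rewrite glue subnn; apply: ysK; lia.
Qed.

Lemma eps_orbit_step e x y : mdist (g x) y < e -> eps_orbit g e (chain_set (fun=> y) 0 x) 1.
Proof. by move=> xy j; rewrite ltnS leqn0 => /eqP ->. Qed.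

Lemma eps_orbit_set_first e xs N w : eps_orbit g e xs N ->
  mdist (g w) (xs 1%N) < e -> eps_orbit g e (chain_set xs 0 w) N.
Proof. by move=> xsN w1 [|j] jN //; apply: xsN. Qed.

Lemma eps_orbit_set_last e xs N w : eps_orbit g e xs N.-1 ->
  mdist (g (xs N.-1)) w < e -> eps_orbit g e (chain_set xs N w) N.
Proof.
move=> xsN w1 j jN; rewrite /chain_set (ltn_eqF jN).
case: eqP => [jN1|jN1]; last by apply: xsN; lia.
by have -> : j = N.-1 by rewrite -jN1.
Qed.

Lemma eps_orbit_move_last e1 e2 xs N w : eps_orbit g e1 xs N ->
  mdist (xs N) w < e2 -> eps_orbit g (e1 + e2) (chain_set xs N w) N.
Proof.
move=> xsN Nw; case: (posnP N) => [-> j|N0]; first by rewrite ltn0.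
apply: eps_orbit_set_last.
  apply: eps_orbit_le (eps_orbit_prefix (leq_pred N) xsN).
  by rewrite lerDl; apply: ltW (le_lt_trans (mdist_ge0 _ _) Nw).
apply: le_lt_trans (metric_triangle _ (xs N) _) _.
by rewrite ltrD // -{2}(prednK N0) xsN // prednK.
Qed.

Lemma eps_orbit_perturb e1 e2 eta xs ys N :
  (forall x y, mdist x y < eta -> mdist (g x) (g y) < e1) ->
  eps_orbit g e2 xs N -> (forall j, (j <= N)%N -> mdist (ys j) (xs j) < eta) ->
  eps_orbit g (e1 + e2 + eta) ys N.
Proof.
move=> gu xsN near j jN.
apply: le_lt_trans (metric_triangle _ (g (xs j)) _) _; rewrite -addrA ltrD //.
  by apply: gu; apply: near; apply: ltnW.
apply: le_lt_trans (metric_triangle _ (xs j.+1) _) _.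
by rewrite ltrD ?xsN // metric_sym near.
Qed.

(* Only chains of positive length count: [x] need not be chain-reachable from itself. *)
Definition chain_reachable x : set M := [set y | forall e, 0 < e ->
  exists xs N, [/\ (0 < N)%N, eps_orbit g e xs N & connects xs N x y]].

Definition chain_basin A : set M := [set x | forall e, 0 < e ->
  exists xs N y, eps_orbit g e xs N /\ A y /\ connects xs N x y].

Lemma chain_reachable_image x : chain_reachable x (g x).
Proof.
move=> e e0; exists (chain_set (fun=> g x) 0 x), 1%N; split => //.
by apply: eps_orbit_step; rewrite mdistxx.
Qed.

Lemma chain_reachable_trans x y z :
  chain_reachable x y -> chain_reachable y z -> chain_reachable x z.
Proof.
move=> xy yz e e0.
have [xs [N [N0 xsN [x0 xN]]]] := xy e e0.
have [ys [K [K0 ysK [y0 yK]]]] := yz e e0.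
have glue : xs N = ys 0%N by rewrite xN y0.
exists (chain_cat xs ys N), (N + K)%N; split; first by rewrite addn_gt0 N0.
  exact: eps_orbit_cat.
by split; rewrite ?chain_cat_last.
Qed.

Lemma closed_chain_reachable x : closed (chain_reachable x).
Proof.
move=> v clv e e0; have e20 : 0 < e / 2 by lra.
have [s xs_s vs] := closure_mdist clv e20.
have [xs [N [N0 xsN [x0 xN]]]] := xs_s _ e20.
exists (chain_set xs N v), N; split => //.
  rewrite [e]splitr; apply: eps_orbit_move_last => //.
  by rewrite xN metric_sym.
by split; [rewrite chain_set_other ?x0 // eq_sym -lt0n | exact: chain_set_at].
Qed.

End Chains.

Section Stability.
Context {R : realType} {M : metricType R}.
Variable g : M -> M.
Hypothesis cM : compact [set: M].

Lemma unstable_chain_limit (A : set M) (delta : R) : 0 < delta ->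
  ~ (exists2 e : R, 0 < e & forall xs N, eps_orbit g e xs N -> A (xs 0%N) ->
       forall j, (j <= N)%N -> nbhd_of A delta (xs j)) ->
  exists2 z, ~ A z & forall e : R, 0 < e ->
    exists xs N, [/\ eps_orbit g e xs N, A (xs 0%N) & xs N = z].
Proof.
move=> d0 unstable.
have escape n : exists c : (nat -> M) * nat,
    [/\ eps_orbit g n.+1%:R^-1 c.1 c.2, A (c.1 0%N) & ~ nbhd_of A delta (c.1 c.2)].
  apply: contrapT => none; apply: unstable; exists n.+1%:R^-1 => // xs N xsN A0 j jN.
  apply: contrapT => out; apply: none; exists (xs, j); split => //.
  exact: eps_orbit_prefix xsN.
have [c Hc] := choice escape.
have [z Hz] := compact_cluster_seq (fun n => (c n).1 (c n).2) cM.
exists z.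
  move=> Az; have [n _ zn] := Hz _ d0 0%N.
  by have [_ _] := Hc n; apply; exists z.
move=> e e0; have e20 : 0 < e / 2 by lra.
have [N _ HN] := near_infty_natSinv_lt (PosNum e20).
have [n Nn zn] := Hz _ e20 N.
have /= small := HN n Nn.
move: (Hc n) zn; case: (c n) => xs K /= [xsN A0 out] zn.
have K0 : 0%N != K.
  by apply: contraPneq out => <-; apply; exists (xs 0%N); rewrite ?mdistxx.
exists (chain_set xs K z), K; split; last exact: chain_set_at.
  rewrite [e]splitr; apply: eps_orbit_move_last; last by rewrite metric_sym.
  exact: eps_orbit_le (ltW small) xsN.
by rewrite chain_set_other.
Qed.

End Stability.

Definition chain_minimal {R : realType} {M : metricType R} (g : M -> M) (A : set M) :=
  A !=set0 /\ forall a, A a -> chain_reachable g a = A.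

Section ChainMinimal.
Context {R : realType} {M : metricType R}.
Variables (g ginv : M -> M).
Hypothesis hg : homeomorphism_with_inverse g ginv.
Hypothesis cM : compact [set: M].

Lemma chain_reachable_preimage x : chain_reachable g x x -> chain_reachable g x (ginv x).
Proof.
have [_ [ginvc [gK _]]] := hg.
move=> xx e e0; have e20 : 0 < e / 2 by lra.
have [r r0 Hr] := compact_unif_cont cM ginvc e20.
pose e' := Num.min r (e / 2).
have e'0 : 0 < e' by rewrite lt_min r0 e20.
have [xs [N [N0 xsN [x0 xN]]]] := xx e' e'0.
(* Going around the loop twice keeps the truncated chain of positive length. *)
have loop2 := eps_orbit_cat xsN xsN (etrans xN (esym x0)).
set zs := chain_cat xs xs N in loop2.
have zs_last : zs (N + N)%N = x by rewrite /zs chain_cat_last ?xN ?x0.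
have K0 : (0 < (N + N).-1)%N by lia.
have lastK : mdist (g (zs (N + N).-1)) x < e'.
  by have := loop2 (N + N).-1; rewrite prednK ?addn_gt0 ?N0 // zs_last; apply.
exists (chain_set zs (N + N).-1 (ginv x)), (N + N).-1; split => //.
  have e'_le : e' <= e / 2 by rewrite ge_min lexx orbT.
  apply: (eps_orbit_le (e := e' + e / 2)); first lra.
  apply: eps_orbit_move_last; first exact: eps_orbit_prefix (leq_pred _) loop2.
  by rewrite -{1}(gK (zs _)); apply: Hr; apply: lt_le_trans lastK _; rewrite ge_min lexx.
split; last exact: chain_set_at.
by rewrite chain_set_other /zs ?chain_cat0 // eq_sym lt0n_neq0.
Qed.

Variable A : set M.
Hypothesis hA : chain_minimal g A.

Lemma chain_minimal_closed : closed A.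
Proof. by have [[a Aa] hA'] := hA; rewrite -(hA' a Aa); apply: closed_chain_reachable. Qed.

Lemma chain_minimal_invariant : Defs.invariant g A.
Proof.
have [_ [_ [_ ginvK]]] := hg; have [_ hA'] := hA.
apply/seteqP; split=> [_ [a Aa <-]|a Aa].
  by rewrite -(hA' a Aa); apply: chain_reachable_image.
exists (ginv a); last by rewrite ginvK.
by rewrite -(hA' a Aa); apply: chain_reachable_preimage; rewrite hA'.
Qed.

Lemma chain_minimal_stable : stable g A.
Proof.
split; first exact: chain_minimal_closed.
split; first exact: chain_minimal_invariant.
move=> delta d0; apply: contrapT => /(unstable_chain_limit cM d0) [z Az chains].
apply: Az; have [[a Aa] hA'] := hA; rewrite -(hA' a Aa) => e e0.
have [xs [N [xsN A0 xN]]] := chains e e0.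
have a_x0 : chain_reachable g a (xs 0%N) by rewrite hA'.
have [ys [L [L0 ysL [y0 yL]]]] := a_x0 e e0.
exists (chain_cat ys xs L), (L + N)%N; split; first by rewrite addn_gt0 L0.
  exact: eps_orbit_cat.
by split; rewrite ?chain_cat_last.
Qed.

Lemma chain_minimal_transitive : chain_transitive g A.
Proof.
split; first exact: chain_minimal_closed.
split; first exact: chain_minimal_invariant.
have [gc _] := hg; have [_ hA'] := hA.
move=> e e0 x y Ax Ay; have e30 : 0 < e / 3 by lra.
have [r r0 Hr] := compact_unif_cont cM gc e30.
pose eta := Num.min r (e / 3).
have eta0 : 0 < eta by rewrite lt_min r0 e30.
have [_ [_ Ast]] := chain_minimal_stable.
have [e1 e10 He1] := Ast eta eta0.
pose e2 := Num.min e1 (e / 3).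
have e20 : 0 < e2 by rewrite lt_min e10 e30.
have xy : chain_reachable g x y by rewrite hA'.
have [xs [N [_ xsN [x0 xN]]]] := xy e2 e20.
have near_xs j : (j <= N)%N -> nbhd_of A eta (xs j).
  by apply: He1; [apply: eps_orbit_le xsN; rewrite ge_min lexx | rewrite x0].
have proj w : exists p, (A w -> p = w) /\ (nbhd_of A eta w -> A p /\ mdist p w < eta).
  have [Aw|nAw] := pselect (A w); first by exists w; split => // _; rewrite mdistxx.
  have [[p Ap pw]|far] := pselect (nbhd_of A eta w); first by exists p; split => // /nAw.
  by exists w; split => // /far.
have [p Hp] := choice proj.
exists (p \o xs), N; split; last split.
- have eta_e3 : eta <= e / 3 by rewrite ge_min lexx orbT.
  apply: (eps_orbit_le (e := e / 3 + e / 3 + eta)); first lra.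
  apply: (eps_orbit_perturb (xs := xs)); last by move=> j /near_xs /(Hp _).2 [].
    by move=> u v uv; apply: Hr; apply: lt_le_trans uv _; rewrite ge_min lexx.
  by apply: eps_orbit_le xsN; rewrite ge_min lexx orbT.
- by split; rewrite /= ?x0 ?xN; apply: (Hp _).1.
- by move=> j /near_xs /(Hp _).2 [].
Qed.

Lemma CRH_attractor_chain_minimal : CRH_attractor g A.
Proof.
split; first by case: hA.
split; [exact: chain_minimal_transitive | exact: chain_minimal_stable].
Qed.

End ChainMinimal.

Section MinimalExistence.
Context {R : realType} {M : metricType R}.
Variable g : M -> M.
Hypothesis cM : compact [set: M].

Definition forward_closed_in (v : M) (S : set M) : Prop :=
  [/\ S `<=` chain_reachable g v, S !=set0, closed S &
      forall x, S x -> chain_reachable g x `<=` S].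

Lemma forward_closed_in_reachable x v : chain_reachable g v x ->
  forward_closed_in v (chain_reachable g x).
Proof.
move=> vx; split.
- by move=> y; apply: chain_reachable_trans.
- by exists (g x); apply: chain_reachable_image.
- exact: closed_chain_reachable.
- by move=> y xy z; apply: chain_reachable_trans.
Qed.

Lemma forward_closed_in_bigcap v (F : set (set M)) : F !=set0 ->
  (forall S T, F S -> F T -> S `<=` T \/ T `<=` S) ->
  (forall S, F S -> forward_closed_in v S) ->
  forward_closed_in v (\bigcap_(S in F) S).
Proof.
move=> [S0 FS0] total hF.
have fil : ProperFilter (filter_from F id).
  apply: filter_from_proper; last by move=> S /hF [].
  apply: filter_from_filter; first by exists S0.
  move=> S T FS FT; have [ST|TS] := total S T FS FT.
    by exists S => // x Sx; split => //; apply: ST.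
  by exists T => // x Tx; split => //; apply: TS.
have [p [_ clp]] := cM fil filterT.
split.
- by move=> x /(_ S0 FS0); have [+ _ _ _] := hF S0 FS0; apply.
- exists p => S FS; have [_ _ cS _] := hF S FS; apply: cS => B Bp.
  by apply: clp => //; exists S.
- by apply: closed_bigI => S /hF [].
- move=> x Ix y xy S FS; have [_ _ _ fS] := hF S FS.
  by apply: (fS x) => //; apply: Ix.
Qed.

Lemma exists_chain_minimal (v : M) :
  exists2 A : set M, A `<=` chain_reachable g v & chain_minimal g A.
Proof.
pose T := {S : set M | forward_closed_in v S}.
pose t0 : T := exist _ _ (forward_closed_in_reachable (chain_reachable_image g v)).
pose sup : rel T := fun s t => `[< sval t `<=` sval s >].
have [| | |t tmax] := @ZL_preorder T t0 sup.
- by move=> s; apply/asboolP.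
- by move=> r s t /asboolP rs /asboolP st; apply/asboolP; apply: subset_trans rs.
- move=> F Ftot; have [[s0 Fs0]|F0] := pselect (F !=set0); last first.
    by exists t0 => s Fs; case: F0; exists s.
  have Icl : forward_closed_in v (\bigcap_(S in sval @` F) S).
    apply: forward_closed_in_bigcap; first by exists (sval s0), s0.
      move=> _ _ [s Fs <-] [t Ft <-].
      by case: (Ftot s t Fs Ft) => /asboolP; [right | left].
    by move=> _ [s _ <-]; apply: svalP.
  by exists (exist _ _ Icl) => s Fs; apply/asboolP => x /(_ (sval s)); apply; exists s.
- case: (svalP t) => tv [a ta] tc tfw; exists (sval t) => //; split; first by exists a.
  move=> b tb; apply/seteqP; split; first exact: tfw.
  have bcl := forward_closed_in_reachable (tv b tb).
  by apply/asboolP/(tmax (exist _ _ bcl))/asboolP/tfw.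
Qed.

End MinimalExistence.

Section ChainForward.
Context {R : realType} {M : metricType R}.
Variables (g : M -> M) (e : R) (C : set M).
Hypothesis e0 : 0 < e.

Definition eps_chain_forward : set M :=
  [set u | exists xs N, [/\ eps_orbit g e xs N, C (xs 0%N) & xs N = u]].

Lemma sub_eps_chain_forward : C `<=` eps_chain_forward.
Proof. by move=> c Cc; exists (fun=> c), 0%N; split => // j; rewrite ltn0. Qed.

Lemma open_eps_chain_forward : Defs.invariant g C -> open eps_chain_forward.
Proof.
move=> gC; rewrite openE => u [xs [N [xsN C0 xN]]]; apply/nbhs_mdist.
have [N0|N0] := posnP N.
  have : (g @` C) u by rewrite gC -xN N0.
  move=> [c Cc gcu]; exists e => // w uw.
  exists (chain_set (fun=> w) 0 c), 1%N; split => //.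
  by apply: eps_orbit_step; rewrite gcu.
have slack : 0 < e - mdist (g (xs N.-1)) u.
  by rewrite subr_gt0 -xN -{2}(prednK N0); apply: xsN; rewrite prednK.
exists (e - mdist (g (xs N.-1)) u) => // w uw.
exists (chain_set xs N w), N; split; last exact: chain_set_at.
  apply: eps_orbit_set_last; first exact: eps_orbit_prefix (leq_pred N) xsN.
  by apply: le_lt_trans (metric_triangle _ u _) _; rewrite -ltrBrDl.
by rewrite chain_set_other // eq_sym -lt0n.
Qed.

Lemma chain_reachable_closure_forward v : continuous g ->
  closure eps_chain_forward v -> chain_reachable g v `<=` eps_chain_forward.
Proof.
move=> gc clv y /(_ e e0) [ys [K [K0 ysK [y0 <-]]]].
have slack : 0 < e - mdist (g v) (ys 1%N) by rewrite subr_gt0 -y0 ysK.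
have [r r0 Hr] := continuous_mdist v gc slack.
have [s [xs [N [xsN C0 xN]]] vs] := closure_mdist clv r0.
have first_step : mdist (g s) (ys 1%N) < e.
  apply: le_lt_trans (metric_triangle _ (g v) _) _.
  by rewrite metric_sym -ltrBrDr; apply: Hr.
have ysK' := eps_orbit_set_first ysK first_step.
exists (chain_cat xs (chain_set ys 0 s) N), (N + K)%N; split => //.
  by apply: eps_orbit_cat; rewrite // chain_set_at.
by rewrite chain_cat_last ?chain_set_at // chain_set_other // -lt0n.
Qed.

End ChainForward.

Section AttractorsNearCore.
Context {R : realType} {M : metricType R}.
Variables (g ginv : M -> M).
Hypothesis hg : homeomorphism_with_inverse g ginv.
Hypothesis cM : compact [set: M].
Hypothesis hconn : connected [set: M].
Variable C : set M.
Hypothesis hCs : stable g C.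
Hypothesis hCn : C !=set0.
Hypothesis hCb : chain_basin g C `<=` C.
Variable z : M.
Hypothesis hz : ~ C z.

Lemma dissipative_attractor_near (delta : R) : 0 < delta -> exists A : set M,
  [/\ dissipative_attractor g A, A `<=` nbhd_of C delta & forall a, A a -> ~ C a].
Proof.
move=> d0; have [gc _] := hg; have [Ccl [Cinv Cst]] := hCs.
have [r0 r00 zfar] := closed_not_nbhd_of Ccl hz.
pose r := Num.min delta r0.
have r_gt0 : 0 < r by rewrite lt_min d0 r00.
have r_le_r0 : r <= r0 by rewrite ge_min lexx orbT.
have [e e0 He] := Cst r r_gt0.
pose S := eps_chain_forward g e C.
have S_near : S `<=` nbhd_of C r by move=> _ [xs [N [xsN C0 <-]]]; apply: (He xs N).
have [v [clv Sv]] : exists v, closure S v /\ ~ S v.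
  apply: (connected_closure_notin hconn (open_eps_chain_forward e0 Cinv)).
    by have [c Cc] := hCn; exists c; apply: sub_eps_chain_forward.
  by move=> /S_near /(nbhd_of_le r_le_r0) /zfar.
have vS := chain_reachable_closure_forward e0 gc clv.
have [A Av Amin] := exists_chain_minimal g cM v.
exists A; split.
- split; first exact: (CRH_attractor_chain_minimal hg cM Amin).
  exists v; split; first by move=> /Av /vS.
  move=> eps eps0; have [a Aa] := Amin.1.
  by have [xs [N [_ xsN vxs]]] := Av a Aa eps eps0; exists xs, N, a.
- by move=> a /Av /vS /S_near; apply: nbhd_of_le; rewrite ge_min lexx.
- move=> a /Av va Ca; apply: Sv; apply/sub_eps_chain_forward/hCb => eps eps0.
  by have [xs [N [_ xsN vxs]]] := va eps eps0; exists xs, N, a.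
Qed.

End AttractorsNearCore.

Lemma homeomorphism_with_inverse_sym {R : realType} {M : metricType R} (f finv : M -> M) :
  homeomorphism_with_inverse f finv -> homeomorphism_with_inverse finv f.
Proof. by case=> fc [finvc [fK finvK]]; split. Qed.

Section InverseDynamics.
Context {R : realType} {M : metricType R}.
Variables (f finv : M -> M).
Hypothesis hf : homeomorphism_with_inverse f finv.
Hypothesis cM : compact [set: M].
Variable C : set M.

Lemma eps_orbit_rev (e : R) : 0 < e -> exists2 e' : R, 0 < e' &
  forall xs N, eps_orbit finv e' xs N -> eps_orbit f e (fun j => xs (N - j)%N) N.
Proof.
have [fc [_ [_ finvK]]] := hf.
move=> e0; have [e' e'0 He'] := compact_unif_cont cM fc e0.
exists e' => // xs N xsN j jN.
have -> : (N - j)%N = (N - j.+1).+1 by lia.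
by have := He' _ _ (xsN (N - j.+1)%N ltac:(lia)); rewrite finvK metric_sym.
Qed.

Lemma invariant_inv : Defs.invariant f C -> Defs.invariant finv C.
Proof.
have [_ [_ [fK _]]] := hf.
move=> fC; apply/seteqP; split=> [_ [c Cc <-]|c Cc].
  by move: Cc; rewrite -{1}fC => -[c' Cc' <-]; rewrite fK.
by exists (f c); [rewrite -fC; exists c | rewrite fK].
Qed.

Hypothesis hCs : stable f C.

Lemma chain_basin_inv : chain_basin finv C `<=` C.
Proof.
have [Ccl [_ Cst]] := hCs.
move=> x xC; apply: contrapT => Cx.
have [r r0 xfar] := closed_not_nbhd_of Ccl Cx.
have [e e0 He] := Cst r r0.
have [e' e'0 He'] := eps_orbit_rev e0.
have [xs [N [y [xsN [Cy [x0 xN]]]]]] := xC e' e'0.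
apply: xfar; have := He _ N (He' _ _ xsN); rewrite subn0 xN.
by move=> /(_ Cy N (leqnn N)); rewrite subnn x0.
Qed.

Hypothesis hCb : chain_basin f C `<=` C.

Lemma stable_inv : stable finv C.
Proof.
have [Ccl [Cinv _]] := hCs.
split=> //; split; first exact: invariant_inv.
move=> delta d0; apply: contrapT => /(unstable_chain_limit (g := finv) cM d0) [z Cz chains].
apply/Cz/hCb => e e0; have [e' e'0 He'] := eps_orbit_rev e0.
have [xs [N [xsN C0 xN]]] := chains e' e'0.
exists (fun j => xs (N - j)%N), N, (xs 0%N); split; first exact: He'.
by split=> //; rewrite /connects subn0 subnn.
Qed.

End InverseDynamics.

Lemma injective_shrinking_family {R : realType} {M : metricType R}
    (C : set M) (P : set M -> Prop) : closed C ->
  (forall X, P X -> X !=set0) ->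
  (forall d : R, 0 < d -> exists X, [/\ P X, X `<=` nbhd_of C d & forall x, X x -> ~ C x]) ->
  exists X : nat -> set M,
    [/\ forall k, P (X k), injective X & forall k, X k `<=` nbhd_of C (harmonic k)].
Proof.
move=> Ccl Pne near.
have [X1 [PX1 _ _]] := near 1 ltr01; have [x1 _] := Pne X1 PX1.
have witness d : exists t : set M * (M * R), 0 < d ->
    [/\ P t.1, t.1 `<=` nbhd_of C d, t.1 t.2.1, 0 < t.2.2 & ~ nbhd_of C t.2.2 t.2.1].
  have [d0|nd] := pselect (0 < d); last by exists (X1, (x1, 1)) => /nd.
  have [X [PX Xnear XC]] := near d d0; have [a Xa] := Pne X PX.
  have [r r0 afar] := closed_not_nbhd_of Ccl (XC a Xa).
  by exists (X, (a, r)).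
have [t Ht] := choice witness.
pose rad d := (t d).2.2.
pose fix d k := if k is k'.+1 then Num.min (harmonic k) (Num.min (d k') (rad (d k')))
  else harmonic 0.
have dS k : d k.+1 = Num.min (harmonic k.+1) (Num.min (d k) (rad (d k))) by [].
have d_step k : d k.+1 <= d k /\ d k.+1 <= rad (d k).
  by rewrite dS !ge_min !lexx !orbT.
have d_gt0 k : 0 < d k.
  elim: k => [|k IH]; first exact: harmonic_gt0.
  have [_ _ _ r0 _] := Ht _ IH.
  by rewrite dS !lt_min IH r0 harmonic_gt0.
have d_le k : d k <= harmonic k by case: k => [|k]; rewrite ?dS ?ge_min lexx.
have d_anti i j : (i < j)%N -> d j <= d i.+1.
  elim: j => // j IH; rewrite ltnS leq_eqVlt => /predU1P [-> //|ij].
  exact: le_trans (d_step j).1 (IH ij).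
have X_ne i j : (i < j)%N -> (t (d i)).1 <> (t (d j)).1.
  move=> ij Xij; have [_ _ Xa _ afar] := Ht _ (d_gt0 i).
  have [_ Xnear _ _ _] := Ht _ (d_gt0 j).
  apply/afar/(nbhd_of_le (le_trans (d_anti _ _ ij) (d_step i).2))/Xnear.
  by rewrite -Xij.
exists (fun k => (t (d k)).1); split.
- by move=> k; have [] := Ht _ (d_gt0 k).
- by move=> i j Xij; case: (ltngtP i j) => // [/X_ne | /X_ne /(_ (esym Xij))].
- move=> k; have [_ Xnear _ _ _] := Ht _ (d_gt0 k).
  exact: subset_trans Xnear (nbhd_of_le (d_le k)).
Qed.

Theorem theorem1 (R : realType) (M : metricType R) (f finv : M -> M)
  (hM_compact : compact [set: M]) (hM_connected : connected [set: M])
  (hM_separable : @separable_space R M)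
  (hf : homeomorphism_with_inverse f finv)
  (hM_not_ct : ~ chain_transitive f [set: M])
  (C : set M) (hC : reversible_core f C) :
  exists (A Rp : nat -> set M) (delta : nat -> R),
    (forall k, dissipative_attractor f (A k)) /\ injective A /\
    (forall k, dissipative_repeller f finv (Rp k)) /\ injective Rp /\
    delta @ \oo --> 0 /\
    (forall k, A k `<=` nbhd_of C (delta k) /\ Rp k `<=` nbhd_of C (delta k)).
Proof.
have [[Cne [Cct Cst]] Cnd] := hC.
have Cbasin : chain_basin f C `<=` C.
  by move=> x xC; apply: contrapT => Cx; apply: Cnd; split; last exists x.
have [z Cz] : exists z, ~ C z.
  apply: contrapT => /forallNP CT; apply: hM_not_ct.
  by have -> : [set: M] = C by apply/seteqP; split=> // x _; apply: contrapT; apply: CT.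
have [Ccl _] := Cst.
have dissipative_ne g (X : set M) : dissipative_attractor g X -> X !=set0 by case=> [[]].
have [A [Adiss Ainj Anear]] := injective_shrinking_family Ccl (@dissipative_ne f)
  (dissipative_attractor_near hf hM_compact hM_connected Cst Cne Cbasin Cz).
have [Rp [Rdiss Rinj Rnear]] := injective_shrinking_family Ccl (@dissipative_ne finv)
  (dissipative_attractor_near (homeomorphism_with_inverse_sym hf) hM_compact hM_connected
    (stable_inv hf hM_compact Cst Cbasin) Cne (chain_basin_inv hf hM_compact Cst) Cz).
exists A, Rp, harmonic; do 4!split=> //.
split; first exact: cvg_harmonic.
by move=> k; split.
Qed.
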